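(* Let $\Gamma\subseteq C^0(\mathbb{R})$ be a class such that for every compact $K\subset\mathbb{R}$, continuous $h:K\to\mathbb{R}$ and $\eta>0$ there is $\gamma\in\Gamma$ with $\sup_K|h-\gamma|<\eta$. Let $\mathcal{G}$ be a class of real functions that are continuously differentiable on an open set containing $[0,1]^d$, such that for every $R(\boldsymbol{x})=\sum_{i=1}^N\psi_i(\boldsymbol{a}_i^\top\boldsymbol{x}+b_i)$ with $\psi_i\in C^1(\mathbb{R})$ and every $\eta>0$ there is $G\in\mathcal{G}$ with $\sup_{[0,1]^d}\|\nabla R-\nabla G\|<\eta$. Let $F:[0,1]^d\to\mathbb{R}$ be of the form $F(\boldsymbol{x})=T\big(\sum_{i=1}^N\psi_i(\boldsymbol{a}_i^\top\boldsymbol{x}+b_i)\big)$ with $T,\psi_i\in C^1(\mathbb{R})$, $\boldsymbol{a}_i\in\mathbb{R}^d$, $b_i\in\mathbb{R}$. Then for every $\epsilon>0$ there exist $\gamma\in\Gamma$, $G\in\mathcal{G}$ and $\beta\in\mathbb{R}$ such that, with $h(\boldsymbol{x})=\gamma(G(\boldsymbol{x})+\beta)\,\nabla G(\boldsymbol{x})$, $$\sup_{\boldsymbol{x}\in[0,1]^d}\|\nabla F(\boldsymbol{x})-h(\boldsymbol{x})\|<\epsilon .$$ Moreover every function of the form $h=\gamma(G+\beta)\nabla G$ with $\gamma$ continuous and $G$ continuously differentiable is the gradient of a $C^1$ function on $[0,1]^d$ (namely $\tilde\Gamma(G+\beta)$ with $\tilde\Gamma'=\gamma$).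
   Context: $C^0(\mathbb{R})$, $C^1(\mathbb{R})$: continuous and continuously differentiable real functions on $\mathbb{R}$. $\|\cdot\|$ is the Euclidean norm. *)

From HB Require Import structures.
From mathcomp Require Import all_boot all_order all_algebra.
From mathcomp Require Import all_classical all_reals all_analysis.
Set Implicit Arguments. Unset Strict Implicit. Unset Printing Implicit Defensive.
Import Order.TTheory GRing.Theory Num.Theory.
Import numFieldNormedType.Exports.
Local Open Scope classical_set_scope.
Local Open Scope ring_scope.

Section Defs.
Variables (R : realType) (d : nat).
Notation V := 'rV[R]_d.

Definition cube : set V := [set x | forall i : 'I_d, 0 <= x 0 i <= 1].

(* Euclidean norm (the library norm on 'rV is the max-norm) *)
Definition enorm (v : V) : R := Num.sqrt (\sum_(i < d) (v 0 i) ^+ 2).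

Definition dotv (a x : V) : R := \sum_(j < d) a 0 j * x 0 j.

Definition partial (i : 'I_d) (f : V -> R) (x : V) : R := 'D_(delta_mx 0 i) f x.
Definition grad (f : V -> R) (x : V) : V := \row_(i < d) partial i f x.

Definition C1on (U : set V) (f : V -> R) : Prop :=
  open U /\ (forall x, U x -> differentiable f x) /\
  (forall i : 'I_d, forall x, U x -> {for x, continuous (partial i f)}).

Definition C1_near_cube (f : V -> R) : Prop :=
  exists U : set V, cube `<=` U /\ C1on U f.

Definition ridge (N : nat) (psi : 'I_N -> R -> R) (a : 'I_N -> V) (b : 'I_N -> R)
  (x : V) : R := \sum_(i < N) psi i (dotv (a i) x + b i).
End Defs.

Definition C1R (R : realType) (f : R -> R) : Prop :=
  (forall x : R, derivable f x 1) /\ continuous (derive1 f).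

(* Since grad F = T'(R) grad R, approximate grad R within e by grad G; the mean
   value theorem on segments from 0 shows that G + beta, with
   beta = R(0) - G(0), is uniformly within d e of R on the cube.  Uniform
   continuity of T' on a segment containing the values of R makes T'(G + beta)
   close to T'(R), and an element g of Gam approximating T' on that segment
   makes g(G + beta) close to T'(G + beta); hence g(G + beta) grad G is close to
   grad F.  For the second part, the chain rule applied to the primitive of g
   (given by the fundamental theorem of calculus) shows that
   g(G + beta) grad G is the gradient of that primitive composed with G + beta. *)

From mathcomp Require Import all_boot all_order all_algebra.
From mathcomp Require Import all_classical all_reals all_analysis.
From mathcomp Require Import ring lra.
Set Implicit Arguments.
Unset Strict Implicit.
Unset Printing Implicit Defensive.
Import Order.TTheory GRing.Theory Num.Theory.
Import numFieldNormedType.Exports.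
Local Open Scope classical_set_scope.
Local Open Scope ring_scope.

Section Primitive.
Context {R : realType}.
Variable g : R -> R.
Hypothesis gc : continuous g.
Local Notation mu := (@lebesgue_measure R).

Let integrable_segment A s : mu.-integrable `[A, s] (EFin \o g).
Proof.
apply: continuous_compact_integrable; first exact: segment_compact.
exact: continuous_subspaceT.
Qed.

Lemma Rintegral_segment_split A c s : A <= c -> c <= s ->
  \int[mu]_(t in `[A, s]) g t =
  \int[mu]_(t in `[A, c]) g t + \int[mu]_(t in `[c, s]) g t.
Proof.
move=> Ac cs.
have := @Rintegral_itvB R g (BLeft A) (BRight s) c (integrable_segment A s).
rewrite !bnd_simp => /(_ Ac cs).
rewrite Rintegral_itv_obnd_cbnd => [<-|]; first ring.
by apply: integrableS (integrable_segment A s) => //; apply: subset_itvr; rewrite bnd_simp.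
Qed.

(* The integrals run over [[A, s]], so the base point must lie left of [s]; it
   moves with [s], and [primitiveE] shows that the choice does not matter. *)
Definition primitive (s : R) : R :=
  \int[mu]_(t in `[Num.min s 0 - 1, s]) g t -
  \int[mu]_(t in `[Num.min s 0 - 1, 0]) g t.

Lemma primitiveE A s : A <= Num.min s 0 ->
  primitive s = \int[mu]_(t in `[A, s]) g t - \int[mu]_(t in `[A, 0]) g t.
Proof.
rewrite /primitive; set B := Num.min s 0 - 1.
have Bm : B <= Num.min s 0 by rewrite /B lerBlDr lerDl.
suff base_change A' A'' : A' <= A'' -> A'' <= Num.min s 0 ->
    \int[mu]_(t in `[A', s]) g t - \int[mu]_(t in `[A', 0]) g t =
    \int[mu]_(t in `[A'', s]) g t - \int[mu]_(t in `[A'', 0]) g t.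
  move=> Am; have [AB|/ltW BA] := leP A B; first by rewrite (base_change A B).
  by rewrite (base_change B A).
move=> AA; rewrite le_min => /andP[As A0].
rewrite (Rintegral_segment_split AA As) (Rintegral_segment_split AA A0); ring.
Qed.

Lemma is_derive_primitive (t : R) : is_derive t 1 primitive (g t).
Proof.
pose A := Num.min t 0 - 2.
have mt : Num.min t 0 <= t by rewrite ge_min lexx.
have m0 : Num.min t 0 <= 0 by rewrite ge_min lexx orbT.
have near_primitive : \forall s \near t,
    \int[mu]_(u in `[A, s]) g u - \int[mu]_(u in `[A, 0]) g u = primitive s.
  near=> s; rewrite (@primitiveE A s) // le_min.
  have : `|t - s| < 1 by near: s; apply/nbhs_ballP; exists 1 => //= z; rewrite /ball.
  by move=> /ltr_normlP[? ?]; apply/andP; split; rewrite /A; lra.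
apply: near_eq_is_derive near_primitive _.
have At : (BLeft A < BRight t)%E by rewrite /= lte_fin /A; lra.
have [dint Dint] := @continuous_FTC1 R g (BLeft A) t (t + 1) ltac:(lra)
  (integrable_segment A (t + 1)) At (@gc t).
rewrite -[g t]subr0 -Dint derive1E.
have -> : (fun s => \int[mu]_(u in `[A, s]) g u - \int[mu]_(u in `[A, 0]) g u) =
  (fun s => \int[mu]_(u in `[A, s]) g u) - cst (\int[mu]_(u in `[A, 0]) g u) by [].
by apply: is_deriveB; apply: derivableP.
Unshelve. all: by end_near.
Qed.

End Primitive.

Section DirectionalDerivative.
Context {R : realType}.

Lemma derive_along {U : normedModType R} (f : U -> R) x v :
  'D_v f x = 'D_1 (fun h : R => f (h *: v + x)) 0.
Proof.
rewrite /derive; set q1 := fun h => h^-1 *: _; set q2 := fun h => h^-1 *: _.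
suff -> : q1 = q2 by [].
by apply/funext => h; rewrite /q1 /q2 /= addr0 scale0r add0r [_%:A]mulr1.
Qed.

Lemma is_derive_comp {U : normedModType R} (f : U -> R) (h : R -> R) x v df :
  is_derive x v f df -> derivable h (f x) 1 ->
  is_derive x v (h \o f) (derive1 h (f x) * df).
Proof.
move=> [fv <-] hx.
pose line := fun s : R => f (s *: v + x).
have line0 : line 0 = f x by rewrite /line scale0r add0r.
have dline : derivable line 0 1 := (derivable1P f x v).1 fv.
have hline : derivable h (line 0) 1 by rewrite line0.
apply: DeriveDef.
  apply/derivable1P; change (derivable (h \o line) 0 1).
  by apply/derivable1_diffP/differentiable_comp; apply/derivable1_diffP.
rewrite derive_along (derive_along f) -!derive1E.
by rewrite (@derive1_comp _ line h) // line0.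
Qed.

Lemma is_derive_line {U : normedModType R} (f : U -> R) x t df :
  is_derive (t *: x) x f df -> is_derive t 1 (fun s : R => f (s *: x)) df.
Proof.
move=> [fx <-].
have along : (fun h : R => f ((h *: 1 + t) *: x)) = (fun h => f (h *: x + t *: x)).
  by apply/funext => h; rewrite [h *: 1]mulr1 scalerDl.
apply: DeriveDef.
  by apply/derivable1P; rewrite along; exact: (derivable1P f _ _).1 fx.
by rewrite (@derive_along R^o) (derive_along f) along.
Qed.

End DirectionalDerivative.

Section Gradient.
Context {R : realType} {d : nat}.
Local Notation V := 'rV[R]_d.

Definition derive_by_grad (f : V -> R) (p : V) : Prop :=
  forall v, is_derive p v f (dotv v (grad f p)).

Lemma dotvC (x y : V) : dotv x y = dotv y x.
Proof. by apply: eq_bigr => j _; rewrite mulrC. Qed.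

Lemma dotvDr (a x y : V) : dotv a (x + y) = dotv a x + dotv a y.
Proof. by rewrite /dotv -big_split; apply: eq_bigr => j _; rewrite mxE mulrDr. Qed.

Lemma dotvBr (a x y : V) : dotv a (x - y) = dotv a x - dotv a y.
Proof. by rewrite /dotv -sumrB; apply: eq_bigr => j _; rewrite !mxE mulrBr. Qed.

Lemma dotvZr (a x : V) (k : R) : dotv a (k *: x) = k * dotv a x.
Proof. by rewrite /dotv mulr_sumr; apply: eq_bigr => j _; rewrite mxE mulrCA. Qed.

Lemma dotv_delta (a : V) j : dotv a 'e_j = a 0 j.
Proof.
rewrite /dotv (bigD1 j) //= mxE !eqxx mulr1 big1 ?addr0 // => k kj.
by rewrite mxE eqxx (negbTE kj) mulr0.
Qed.

Lemma differentiable_derive_by_grad (f : V -> R) p :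
  differentiable f p -> derive_by_grad f p.
Proof.
move=> df v; apply: DeriveDef; first exact: diff_derivable.
rewrite deriveE // {1}(row_sum_delta v) linear_sum /dotv.
by apply: eq_bigr => j _; rewrite linearZ -deriveE // !mxE.
Qed.

Lemma gradB (f g : V -> R) p :
  (forall v, derivable f p v) -> (forall v, derivable g p v) ->
  grad (f - g) p = grad f p - grad g p.
Proof. by move=> df dg; apply/rowP => j; rewrite !mxE /partial deriveB. Qed.

Lemma derive_by_gradB (f g : V -> R) p :
  derive_by_grad f p -> derive_by_grad g p -> derive_by_grad (f - g) p.
Proof.
move=> df dg v; rewrite gradB ?dotvBr; first exact: is_deriveB.
- by move=> w; have [] := df w.
- by move=> w; have [] := dg w.
Qed.

Lemma grad_comp (f : V -> R) (h : R -> R) x :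
  (forall v, derivable f x v) -> derivable h (f x) 1 ->
  grad (fun y => h (f y)) x = derive1 h (f x) *: grad f x.
Proof.
move=> df hx; apply/rowP => j; rewrite !mxE /partial.
by have [] := is_derive_comp (derivableP (df 'e_j)) hx.
Qed.

Lemma is_derive_affine (a : V) (c : R) x v :
  is_derive x v (fun y => dotv a y + c) (dotv a v).
Proof.
have quotient_cst : \forall h \near 0^',
    h^-1 *: ((dotv a (h *: v + x) + c) - (dotv a x + c)) = dotv a v.
  near=> h; rewrite dotvDr dotvZr.
  have -> : h * dotv a v + dotv a x + c - (dotv a x + c) = h * dotv a v by ring.
  by rewrite [_ *: _]mulrA mulVf ?mul1r //; near: h; exact: nbhs_dnbhs_neq.
apply: DeriveDef; first exact: is_cvg_near_cst quotient_cst.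
exact: lim_near_cst quotient_cst.
Unshelve. all: by end_near.
Qed.

Section Ridge.
Context {N : nat}.
Variables (psi : 'I_N -> R -> R) (a : 'I_N -> V) (b : 'I_N -> R).
Hypothesis psi_C1 : forall i, C1R (psi i).

Lemma is_derive_ridge x v : is_derive x v (ridge psi a b)
  (\sum_(i < N) derive1 (psi i) (dotv (a i) x + b i) * dotv (a i) v).
Proof.
rewrite /ridge -fct_sumE; apply: is_derive_sum => i.
exact: is_derive_comp (is_derive_affine _ _ _ _) ((psi_C1 i).1 _).
Qed.

Lemma partial_ridge j x : partial j (ridge psi a b) x =
  \sum_(i < N) derive1 (psi i) (dotv (a i) x + b i) * a i 0 j.
Proof.
rewrite /partial; have [_ ->] := is_derive_ridge x 'e_j.
by apply: eq_bigr => i _; rewrite dotv_delta.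
Qed.

Lemma ridge_derive_by_grad x : derive_by_grad (ridge psi a b) x.
Proof.
move=> v; apply: is_derive_eq (is_derive_ridge x v) _.
rewrite [RHS]/dotv; under [RHS]eq_bigr do rewrite mxE partial_ridge mulr_sumr.
rewrite [RHS]exchange_big; apply: eq_bigr => i _ /=.
by rewrite /dotv mulr_sumr; apply: eq_bigr => j _; ring.
Qed.

End Ridge.

End Gradient.

Lemma sum_sqr_le_sqr_sum (R : numDomainType) (I : finType) (u : I -> R) :
  (forall i, 0 <= u i) -> \sum_i u i ^+ 2 <= (\sum_i u i) ^+ 2.
Proof.
move=> u0; rewrite [X in _ <= X]expr2 mulr_suml; apply: ler_sum => i _.
rewrite mulr_sumr (bigD1 i) //= expr2 lerDl.
by apply: sumr_ge0 => j _; exact: mulr_ge0.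
Qed.

Section Cube.
Context {R : realType} {d : nat}.
Local Notation V := 'rV[R]_d.

Lemma coord_le_enorm (v : V) j : `|v 0 j| <= enorm v.
Proof.
rewrite /enorm -sqrtr_sqr ler_sqrt; last by apply: sumr_ge0 => i _; exact: sqr_ge0.
by rewrite (bigD1 j) //= lerDl; apply: sumr_ge0 => i _; exact: sqr_ge0.
Qed.

Lemma enorm_le_sum (v : V) : enorm v <= \sum_j `|v 0 j|.
Proof.
have sum_ge0 : 0 <= \sum_j `|v 0 j| by apply: sumr_ge0.
rewrite /enorm -(ger0_norm sum_ge0) -sqrtr_sqr ler_sqrt ?sqr_ge0 //.
apply: le_trans (sum_sqr_le_sqr_sum (fun j => normr_ge0 (v 0 j))).
by apply: ler_sum => j _; rewrite real_normK ?num_real.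
Qed.

Lemma cube0 : cube (0 : V).
Proof. by move=> j; rewrite mxE lexx ler01. Qed.

Lemma cube_scale (x : V) (t : R) : cube x -> 0 <= t <= 1 -> cube (t *: x).
Proof.
move=> cx /andP[t0 t1] j; rewrite mxE; have /andP[x0 x1] := cx j.
by rewrite mulr_ge0 //= -(mul1r 1) ler_pM.
Qed.

Lemma norm_dotv_cube (a x : V) : cube x -> `|dotv a x| <= \sum_j `|a 0 j|.
Proof.
move=> cx; apply: le_trans (ler_norm_sum _ _ _) _; apply: ler_sum => j _.
have /andP[x0 x1] := cx j.
by rewrite normrM -[X in _ <= X]mulr1 ler_pM // ger0_norm.
Qed.

(* Mean value theorem on the segment from [0] to [x], which stays in the cube. *)
Lemma cube_oscillation (f : V -> R) (e : R) :
  (forall p, cube p -> derive_by_grad f p) ->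
  (forall p j, cube p -> `|partial j f p| <= e) ->
  forall x, cube x -> `|f x - f 0| <= d%:R * e.
Proof.
move=> df fe x cx.
have dline (t : R) : 0 <= t <= 1 ->
    is_derive t 1 (fun s : R => f (s *: x)) (dotv x (grad f (t *: x))).
  by move=> t01; apply: is_derive_line; exact: (df _ (cube_scale cx t01) x).
have dline_open (t : R) : t \in `]0, 1[ ->
    is_derive t 1 (fun s : R => f (s *: x)) (dotv x (grad f (t *: x))).
  by rewrite in_itv /= => /andP[/ltW t0 /ltW t1]; apply: dline; apply/andP.
have line_cont : {within `[0, 1], continuous (fun s : R => f (s *: x))}.
  apply: derivable_within_continuous => t; rewrite in_itv /= => t01.
  by have [] := dline t t01.
have [c c01] := MVT ltr01 dline_open line_cont.
rewrite scale1r scale0r subr0 mulr1 => ->.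
have cc : cube (c *: x).
  by apply: cube_scale => //; move: c01; rewrite in_itv /= => /andP[/ltW -> /ltW ->].
rewrite dotvC; apply: le_trans (norm_dotv_cube _ cx) _.
have -> : d%:R * e = \sum_(j < d) e by rewrite sumr_const card_ord mulr_natl.
by apply: ler_sum => j _; rewrite mxE; apply: fe.
Qed.

Lemma sum_norm_coord_le (r q : V) (e : R) : (forall j, `|(r - q) 0 j| <= e) ->
  \sum_j `|q 0 j| <= \sum_j `|r 0 j| + d%:R * e.
Proof.
move=> rq; have -> : d%:R * e = \sum_(j < d) e by rewrite sumr_const card_ord mulr_natl.
rewrite -big_split; apply: ler_sum => j _ /=; have := rq j; rewrite !mxE distrC.
by have := ler_normD (r 0 j) (q 0 j - r 0 j); rewrite addrCA subrr addr0; lra.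
Qed.

Lemma enorm_scale_diff_le (u w c MT e eta Q : R) (r q : V) :
  `|u| <= MT -> (forall j, `|(r - q) 0 j| <= e) ->
  `|u - w| <= eta -> `|w - c| <= eta -> \sum_j `|q 0 j| <= Q ->
  enorm (u *: r - c *: q) <= d%:R * (MT * e) + 2 * eta * Q.
Proof.
move=> uM rq uw wc qQ; apply: le_trans (enorm_le_sum _) _.
have coord j : `|(u *: r - c *: q) 0 j| <= MT * e + 2 * eta * `|q 0 j|.
  rewrite !mxE (_ : u * r 0 j - c * q 0 j =
    u * (r 0 j - q 0 j) + ((u - w) + (w - c)) * q 0 j); last by ring.
  apply: le_trans (ler_normD _ _) _; rewrite !normrM; apply: lerD.
    by apply: ler_pM => //; have := rq j; rewrite !mxE.
  by apply: ler_wpM2r => //; apply: le_trans (ler_normD _ _) _; lra.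
apply: le_trans (ler_sum _ (fun j _ => coord j)) _.
rewrite big_split /= sumr_const card_ord -mulr_sumr [d%:R * _]mulr_natl lerD //.
by rewrite ler_wpM2l //; have := normr_ge0 (u - w); lra.
Qed.

End Cube.

Section SegmentBounds.
Context {R : realType}.

Lemma bounded_segment (f : R -> R) (B : R) : continuous f ->
  \forall M \near +oo, forall t, `|t| <= B -> `|f t| <= M.
Proof.
move=> fc; have := continuous_compact (continuous_subspaceT fc) (@segment_compact R (- B) B).
move=> /compact_bounded; rewrite /= /bounded_near.
apply: filterS => M fM t /ler_normlP[tB Bt].
by apply: fM; exists t => //=; rewrite in_itv /= -lerNl tB.
Qed.

(* Heine's theorem, with only the first point confined to [[-B, B]]. *)
Lemma unif_continuous_segment (f : R -> R) (B eps : R) : continuous f -> 0 < eps ->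
  exists2 del, 0 < del & forall s t, `|s| <= B -> `|s - t| < del -> `|f s - f t| < eps.
Proof.
move=> fc e0.
pose close del s := forall t, `|s - t| < del -> `|f s - f t| < eps.
have : \forall del \near 0^'+, `[- B, B] `<=` close del.
  have cover := (compact_near_coveringP `[- B, B]).1 (@segment_compact R (- B) B).
  apply: (cover R 0^'+ close) => x _.
  have /cvgrPdist_lt /(_ (eps / 2)) := fc x.
  move=> /(_ ltac:(lra)) /nbhs_ballP [eta /= eta0 fx_near].
  near=> y del => t /= yt.
  have xy : `|x - y| < eta / 2.
    by near: y; apply/nbhs_ballP; exists (eta / 2) => /=; [lra | move=> z; rewrite /ball].
  have del_small : del < eta / 2 by near: del; apply: nbhs_right_lt; lra.
  have xt : `|x - t| < eta.
    by rewrite (_ : x - t = (x - y) + (y - t)); [apply: le_lt_trans (ler_normD _ _) _; lra|ring].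
  have fxy : `|f x - f y| < eps / 2 by apply: fx_near; rewrite /ball /=; lra.
  have fxt : `|f x - f t| < eps / 2 by apply: fx_near.
  rewrite (_ : f y - f t = (f x - f t) - (f x - f y)); last ring.
  by apply: le_lt_trans (ler_normB _ _) _; lra.
move=> cover; near (0 : R)^'+ => del.
exists del; first by near: del; exact: nbhs_right_gt.
near: del; apply: filterS cover => del cl s t /ler_normlP[sB Bs].
by apply: cl; rewrite /= in_itv /= -lerNl sB.
Unshelve. all: by end_near.
Qed.

End SegmentBounds.

Section C1R.
Context {R : realType}.

Lemma C1R_continuous (h : R -> R) : C1R h -> continuous h.
Proof. by move=> [dh _] t; apply/differentiable_continuous/derivable1_diffP. Qed.

Lemma derive1_addr (c : R) : derive1 (fun t => t + c) = cst 1.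
Proof. by apply/funext => t; rewrite derive1E; have [] := is_derive_shift t 1 c. Qed.

Lemma C1R_shift (c : R) : C1R (fun t => t + c).
Proof.
split=> [t|]; first by have [] := is_derive_shift t 1 c.
by rewrite derive1_addr; exact: cst_continuous.
Qed.

Lemma C1R_primitive (g : R -> R) :
  continuous g -> C1R (primitive g).
Proof.
move=> gc; split=> [t|]; first by have [] := is_derive_primitive gc t.
have -> : derive1 (primitive g) = g.
  by apply/funext => t; rewrite derive1E; have [] := is_derive_primitive gc t.
exact: gc.
Qed.

End C1R.

Section Composition.
Context {R : realType} {d : nat}.
Local Notation V := 'rV[R]_d.

Lemma C1on_comp (U : set V) (f : V -> R) (h : R -> R) :
  C1on U f -> C1R h -> C1on U (fun x => h (f x)).
Proof.
move=> [oU [df cf]] [dh ch]; split=> //; split=> [x Ux|i x Ux].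
  by apply: differentiable_comp; [exact: df | exact/derivable1_diffP].
have partial_comp y : U y ->
    partial i (fun z => h (f z)) y = derive1 h (f y) * partial i f y.
  move=> Uy; rewrite /partial.
  by have [] := is_derive_comp (derivableP (diff_derivable (v := 'e_i) (df y Uy))) (dh (f y)).
have near_U : \forall y \near x, U y by exact: open_nbhs_nbhs.
have near_partial : {near x, (fun y => derive1 h (f y) * partial i f y) =1
    partial i (fun z => h (f z))}.
  by near=> y; rewrite partial_comp //; near: y.
apply: cvg_trans; first exact: near_eq_cvg near_partial.
rewrite partial_comp //; apply: cvgM; last exact: cf.
exact: continuous_comp (differentiable_continuous (df x Ux)) (ch _).
Unshelve. all: by end_near.
Qed.

Lemma C1_near_cube_comp (f : V -> R) (h : R -> R) :
  C1_near_cube f -> C1R h -> C1_near_cube (fun x => h (f x)).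
Proof. by move=> [U [cU fU]] hC1; exists U; split=> //; exact: C1on_comp. Qed.

Lemma grad_comp_shift (G : V -> R) (h : R -> R) (c : R) x :
  (forall v, derivable G x v) -> derivable h (G x + c) 1 ->
  grad (fun y => h (G y + c)) x = derive1 h (G x + c) *: grad G x.
Proof.
move=> dG dh; have [dshift _] := C1R_shift c.
have dGc v : derivable (fun y => G y + c) x v by exact: derivableD.
rewrite (grad_comp (f := fun y => G y + c) dGc dh).
by rewrite (grad_comp (h := fun t => t + c) dG (dshift _)) derive1_addr scale1r.
Qed.

End Composition.

Section RidgeApproximation.
Context {R : realType} {d N : nat}.
Variables (psi : 'I_N -> R -> R) (a : 'I_N -> 'rV[R]_d) (b : 'I_N -> R).
Hypothesis psi_C1 : forall i, C1R (psi i).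
Local Notation V := 'rV[R]_d.
Local Notation Rf := (ridge psi a b).

Lemma ridge_bounded_on_cube : exists2 M, 0 <= M & forall x, cube x ->
  `|Rf x| <= M /\ \sum_j `|partial j Rf x| <= M.
Proof.
pose S := \sum_i (`|b i| + \sum_j `|a i 0 j|).
have arg_le i x : cube x -> `|dotv (a i) x + b i| <= S.
  move=> cx; apply: le_trans (ler_normD _ _) _.
  rewrite /S (bigD1 i) //= [X in X <= _]addrC -addrA lerD2l.
  apply: le_trans (norm_dotv_cube _ cx) _; rewrite lerDl.
  by apply: sumr_ge0 => k _; apply: addr_ge0 => //; apply: sumr_ge0.
have bounded_i i : \forall M \near +oo, forall t, `|t| <= S ->
    `|psi i t| <= M /\ `|derive1 (psi i) t| <= M.
  have psiM := bounded_segment S (C1R_continuous (psi_C1 i)).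
  have dpsiM := bounded_segment S (psi_C1 i).2.
  by near=> M => t tS; split; [apply: (near psiM M) | apply: (near dpsiM M)].
have [M0 M0_gt0 HM0] := pinfty_ex_gt0 (filter_forall _ bounded_i).
pose A := \sum_j \sum_i `|a i 0 j|.
have A_ge0 : 0 <= A by do 2 apply: sumr_ge0 => ? _.
exists (M0 * (N%:R + A)); first by apply: mulr_ge0; [exact: ltW | apply: addr_ge0].
move=> x cx; split.
- apply: le_trans (ler_norm_sum _ _ _) _.
  apply: le_trans (_ : _ <= \sum_(i < N) M0) _.
    by apply: ler_sum => i _; exact: (HM0 i _ (arg_le i x cx)).1.
  by rewrite sumr_const card_ord -[X in X <= _]mulr_natr ler_wpM2l ?lerDl // ltW.
- apply: le_trans (_ : _ <= M0 * A) _; last by rewrite ler_wpM2l ?lerDr // ltW.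
  rewrite mulr_sumr; apply: ler_sum => j _; rewrite partial_ridge // mulr_sumr.
  apply: le_trans (ler_norm_sum _ _ _) _; apply: ler_sum => i _.
  by rewrite normrM ler_wpM2r //; exact: (HM0 i _ (arg_le i x cx)).2.
Unshelve. all: by end_near.
Qed.

Lemma ridge_approx_shift (G : V -> R) (e : R) : C1_near_cube G ->
  (forall x, cube x -> enorm (grad Rf x - grad G x) <= e) ->
  forall x, cube x -> `|G x + (Rf 0 - G 0) - Rf x| <= d%:R * e.
Proof.
move=> [U [cU [_ [dG _]]]] He x cx.
have dRf p v : derivable Rf p v by have [] := ridge_derive_by_grad a b psi_C1 p v.
have dRG p : cube p -> derive_by_grad (Rf - G) p.
  move=> cp; apply: derive_by_gradB; first exact: ridge_derive_by_grad.
  exact/differentiable_derive_by_grad/dG/cU.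
have partial_le p j : cube p -> `|partial j (Rf - G) p| <= e.
  move=> cp; apply: le_trans (He p cp).
  have := coord_le_enorm (grad (Rf - G) p) j.
  by rewrite mxE gradB // => v; exact/diff_derivable/dG/cU.
have -> : G x + (Rf 0 - G 0) - Rf x = - ((Rf - G) x - (Rf - G) 0) by rewrite !fctE; ring.
by rewrite normrN; exact: cube_oscillation dRG partial_le x cx.
Qed.

Lemma ridge_comp_grad_error (T g : R -> R) (G : V -> R) (M MT eta del e : R) :
  C1R T -> C1_near_cube G ->
  (forall x, cube x -> `|Rf x| <= M /\ \sum_j `|partial j Rf x| <= M) ->
  (forall t, `|t| <= M -> `|derive1 T t| <= MT) ->
  (forall s t, `|s| <= M -> `|s - t| < del -> `|derive1 T s - derive1 T t| < eta) ->
  (forall t, `|t| <= M + 1 -> `|derive1 T t - g t| <= eta) ->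
  (forall x, cube x -> enorm (grad Rf x - grad G x) <= e) ->
  d%:R * e <= 1 -> d%:R * e < del ->
  forall x, cube x ->
    enorm (grad (fun y => T (Rf y)) x - g (G x + (Rf 0 - G 0)) *: grad G x)
    <= d%:R * (MT * e) + 2 * eta * (M + 1).
Proof.
move=> [dT _] G_C1 RfM dTM dT_unif dTg RfG de1 de_del x cx.
have [RfxM dRfxM] := RfM x cx.
have close := ridge_approx_shift G_C1 RfG cx.
set y := G x + (Rf 0 - G 0) in close *.
have dRf v : derivable Rf x v by have [] := ridge_derive_by_grad a b psi_C1 x v.
have RfG_j j : `|(grad Rf x - grad G x) 0 j| <= e.
  exact: le_trans (coord_le_enorm _ j) (RfG x cx).
have dT_Rf : `|derive1 T (Rf x)| <= MT by exact: dTM.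
have dT_close : `|derive1 T (Rf x) - derive1 T y| <= eta.
  by apply/ltW/dT_unif => //; rewrite distrC; lra.
have dT_g : `|derive1 T y - g y| <= eta.
  by apply: dTg; move: RfxM close => /ler_normlP[? ?] /ler_normlP[? ?]; apply/ler_normlP; split; lra.
have gradG_sum : \sum_j `|(grad G x) 0 j| <= M + 1.
  apply: le_trans (sum_norm_coord_le RfG_j) _.
  by under eq_bigr do rewrite mxE; lra.
rewrite (grad_comp dRf (dT _)).
exact: enorm_scale_diff_le dT_Rf RfG_j dT_close dT_g gradG_sum.
Qed.

Lemma ridge_comp_grad_approx (Gam : set (R -> R)) (GG : set (V -> R))
    (T : R -> R) (eps : R) :
  (forall (K : set R) (h : R -> R) (eta : R),
      compact K -> {within K, continuous h} -> 0 < eta ->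
      exists2 g, Gam g & exists2 e, e < eta & forall x, K x -> `|h x - g x| <= e) ->
  (forall G, GG G -> C1_near_cube G) ->
  (forall eta, 0 < eta -> exists2 G, GG G &
      exists2 e, e < eta & forall x, cube x -> enorm (grad Rf x - grad G x) <= e) ->
  C1R T -> 0 < eps ->
  exists g, exists G, exists beta : R, Gam g /\ GG G /\
    exists2 e, e < eps & forall x, cube x ->
      enorm (grad (fun y => T (Rf y)) x - g (G x + beta) *: grad G x) <= e.
Proof.
move=> HGam HGG0 HGG T_C1 eps_gt0; have dTc := T_C1.2.
have [M M_ge0 RfM] := ridge_bounded_on_cube.
have [MT MT_gt0 dTM] := pinfty_ex_gt0 (bounded_segment M dTc).
(* [eta] bounds both errors on [derive1 T]; [m] bounds the uniform error [d e] of
   [G + beta], keeping it below [del] and [1] and [d MT e] below [eps / 4]. *)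
pose eta := eps / (4 * (M + 1)).
have eta_gt0 : 0 < eta by apply: divr_gt0; lra.
have [del del_gt0 dT_unif] := unif_continuous_segment M dTc eta_gt0.
pose m := Num.min 1 (Num.min del (eps / (4 * MT))).
have m_gt0 : 0 < m by rewrite !lt_min ltr01 del_gt0 divr_gt0 //; lra.
have [m1 [mdel mMT]] : m <= 1 /\ m <= del /\ m <= eps / (4 * MT).
  by rewrite !ge_min !lexx !orbT.
have [G GG_G [e e_lt RfG]] :=
  HGG (m / (d%:R + 1)) (divr_gt0 m_gt0 (ltr_wpDl (ler0n _ _) ltr01)).
have de_lt : d%:R * e < m.
  have e_ge0 : 0 <= e := le_trans (sqrtr_ge0 _) (RfG 0 cube0).
  rewrite ltr_pdivlMr ?ltr_wpDl ?ler0n // in e_lt.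
  by have := ler0n R d; nra.
have [g Gam_g [e' e'_lt dTg]] := HGam [set` `[- (M + 1), M + 1]] (derive1 T) eta
  (@segment_compact R _ _) (continuous_subspaceT dTc) eta_gt0.
have dTg' t : `|t| <= M + 1 -> `|derive1 T t - g t| <= eta.
  move=> /ler_normlP[? ?]; apply: le_trans (ltW e'_lt); apply: dTg.
  by rewrite /= in_itv /=; apply/andP; split; lra.
exists g, G, (Rf 0 - G 0); split=> //; split=> //.
exists (d%:R * (MT * e) + 2 * eta * (M + 1)).
  have m4MT : m * (4 * MT) <= eps by rewrite -ler_pdivlMr ?mulr_gt0.
  have -> : 2 * eta * (M + 1) = eps / 2 by rewrite /eta; field; lra.
  by nra.
apply: ridge_comp_grad_error T_C1 (HGG0 _ GG_G) RfM dTM dT_unif dTg' RfG _ _ => //; lra.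
Qed.

End RidgeApproximation.

Theorem theorem5 (R : realType) (d : nat)
  (Gam : set (R -> R)) (GG : set ('rV[R]_d -> R))
  (HGam0 : forall g, Gam g -> continuous g)
  (HGam : forall (K : set R) (h : R -> R) (eta : R),
      compact K -> {within K, continuous h} -> 0 < eta ->
      exists2 g, Gam g &
        exists2 e, e < eta & forall x, K x -> `|h x - g x| <= e)
  (HGG0 : forall G, GG G -> C1_near_cube G)
  (HGG : forall (N : nat) (psi : 'I_N -> R -> R) (a : 'I_N -> 'rV[R]_d)
           (b : 'I_N -> R) (eta : R),
      (forall i, C1R (psi i)) -> 0 < eta ->
      exists2 G, GG G &
        exists2 e, e < eta & forall x, cube x ->
          enorm (grad (ridge psi a b) x - grad G x) <= e)
  (N : nat) (T : R -> R) (psi : 'I_N -> R -> R) (a : 'I_N -> 'rV[R]_d)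
  (b : 'I_N -> R) (HT : C1R T) (Hpsi : forall i, C1R (psi i)) :
  (forall eps : R, 0 < eps ->
     exists g, exists G, exists beta : R, Gam g /\ GG G /\
       exists2 e, e < eps & forall x, cube x ->
         enorm (grad (fun y => T (ridge psi a b y)) x
                - g (G x + beta) *: grad G x) <= e)
  /\
  (forall (g : R -> R) (G : 'rV[R]_d -> R) (beta : R),
     continuous g -> C1_near_cube G ->
     exists Gt : R -> R,
       (forall t, derivable Gt t 1 /\ derive1 Gt t = g t) /\
       C1_near_cube (fun x => Gt (G x + beta)) /\
       (forall x, cube x ->
          grad (fun y => Gt (G y + beta)) x = g (G x + beta) *: grad G x)).
Proof.
split=> [eps eps_gt0 | g G beta gc G_C1].
  have HRf eta : 0 < eta -> exists2 G', GG G' & exists2 e, e < eta &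
      forall x, cube x -> enorm (grad (ridge psi a b) x - grad G' x) <= e.
    by move=> eta_gt0; exact: HGG.
  exact: (ridge_comp_grad_approx Hpsi HGam HGG0 HRf HT eps_gt0).
have dGt t : derivable (primitive g) t 1 /\ derive1 (primitive g) t = g t.
  by rewrite derive1E; have [] := is_derive_primitive gc t.
exists (primitive g); split=> //; split.
  exact: C1_near_cube_comp (C1_near_cube_comp G_C1 (C1R_shift beta)) (C1R_primitive gc).
move=> x cx; have [U [cU [_ [dG _]]]] := G_C1.
rewrite grad_comp_shift ?(dGt _).2 //; last exact: (dGt _).1.
by move=> v; apply/diff_derivable/dG/cU.
Qed.
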